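(* Let $r\geq 3$ be an integer and $c>0$ a real number. If $G$ is a graph of order $n$ with $$e(G)>\left(\frac{r-1}{2r}+c\right)n^{2},$$ then $$k_{r+1}(G)>2c\,\frac{r}{r+1}\left(\frac{n}{r}\right)^{r+1}\qquad\text{and}\qquad js^{(2,r+1,2)}(G)>2c\left(\frac{n}{r}\right)^{r-1}.$$
   Context: All graphs are finite and simple. $e(G)$ is the number of edges of $G$ and $k_s(G)$ is the number of $s$-cliques (complete subgraphs on $s$ vertices) of $G$. For an integer $r\geq 2$, $js^{(2,r+1,2)}(G)$ (the $(2,r+1,2)$-jointsize of $G$) is the maximum, over all edges $uv$ of $G$, of the number of $(r+1)$-cliques of $G$ containing both $u$ and $v$ (and $0$ if $G$ has no edges). *)

From mathcomp Require Import all_boot all_order all_algebra.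
Set Implicit Arguments. Unset Strict Implicit. Unset Printing Implicit Defensive.

Definition simple_graph (T : finType) (e : rel T) : Prop :=
  symmetric e /\ irreflexive e.

Definition is_clique (T : finType) (e : rel T) (A : {set T}) : bool :=
  [forall u in A, forall v in A, (u != v) ==> e u v].

Definition kcliques (T : finType) (e : rel T) (s : nat) : nat :=
  #|[set A : {set T} | is_clique e A && (#|A| == s)]|.

Definition kcliques_through (T : finType) (e : rel T) (s : nat) (u v : T) : nat :=
  #|[set A : {set T} | [&& is_clique e A, #|A| == s, u \in A & v \in A]]|.

(* js^{(2,r+1,2)}(G): max over edges uv of number of (r+1)-cliques containing u and v;
   0 if no edges *)
Definition jointsize (T : finType) (e : rel T) (r : nat) : nat :=
  \max_(p : T * T | e p.1 p.2) kcliques_through e r.+1 p.1 p.2.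

Definition num_edges (T : finType) (e : rel T) : nat :=
  #|[set A : {set T} | is_clique e A && (#|A| == 2)]|.

From mathcomp Require Import all_boot all_order all_algebra.
From mathcomp Require Import ring lra.
Set Implicit Arguments. Unset Strict Implicit. Unset Printing Implicit Defensive.
Import Order.TTheory GRing.Theory Num.Theory.

(* For an s-clique L let d(L) be the number of common neighbours of L.  Double counting
   the pairs (L, w) with w a common neighbour gives
     sum_L d(L) = (s+1) k_{s+1}  and  sum_L d(L)^2 <= n k_{s+1} + s(s+2) k_{s+2},
   so the nonnegativity of sum_L (d(L) - lam)^2 turns a lower bound lam on the ratio
   (s+1) k_{s+1} / k_s into a lower bound on (s+2) k_{s+2} / k_{s+1}.  Starting from the
   average degree beta = 2 e(G) / n this yields (j+2) k_{j+2} >= ((j+1) beta - j n) k_{j+1},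
   hence k_r >= (n/r)^r and (r+1) k_{r+1} >= (r beta - (r-1) n) (n/r)^r, which exceeds
   2 c r^2 (n/r)^{r+1} under the edge density hypothesis.  Finally there are (r+1) r k_{r+1} pairs
   (uv, K) of an ordered edge uv and an (r+1)-clique K containing it, so some edge lies in
   at least (r+1) r k_{r+1} / n^2 of these cliques. *)

Section CliqueCounting.
Variables (T : finType) (e : rel T).

Definition cliques s := [set A : {set T} | is_clique e A && (#|A| == s)].
Definition common_nbhd (L : {set T}) := [set w | (w \notin L) && [forall u in L, e u w]].

Lemma in_cliques s A : (A \in cliques s) = is_clique e A && (#|A| == s).
Proof. by rewrite inE. Qed.

Lemma is_cliqueP (A : {set T}) :
  reflect {in A &, forall u v, u != v -> e u v} (is_clique e A).
Proof.
apply: (iffP forall_inP) => [H u v uA vA | H u uA].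
  by move/forall_inP: (H u uA) => /(_ v vA)/implyP.
by apply/forall_inP=> v vA; apply/implyP; apply: H.
Qed.

Lemma is_cliqueS (A B : {set T}) : B \subset A -> is_clique e A -> is_clique e B.
Proof.
by move=> /subsetP sBA /is_cliqueP eA; apply/is_cliqueP=> u v /sBA uA /sBA; apply: eA.
Qed.

Lemma common_nbhdP (L : {set T}) w :
  reflect (w \notin L /\ {in L, forall u, e u w}) (w \in common_nbhd L).
Proof. by rewrite inE; apply: (iffP andP) => -[wL /forall_inP]. Qed.

Lemma card_cliques_gt0_leq s : 0 < #|cliques s| -> s <= #|T|.
Proof. by case/card_gt0P=> A; rewrite in_cliques => /andP[_ /eqP <-]; apply: max_card. Qed.

Lemma card_cliques1 : #|cliques 1| = #|T|.
Proof.
have ->: cliques 1 = [set [set x] | x : T].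
  apply/setP=> A; rewrite in_cliques; apply/andP/imsetP => [[_ /cards1P[x ->]]|[x _ ->]].
    by exists x.
  by rewrite cards1; split=> //; apply/is_cliqueP=> u v /set1P-> /set1P->; rewrite eqxx.
by rewrite card_imset //; apply: set1_inj.
Qed.

Lemma cliquesD1 s K w : K \in cliques s.+1 -> w \in K ->
  K :\ w \in cliques s /\ w \in common_nbhd (K :\ w).
Proof.
rewrite !in_cliques => /andP[eK /eqP cardK] wK; split.
  rewrite (is_cliqueS (subsetDl _ _) eK) /=.
  by move: (cardsD1 w K); rewrite wK cardK add1n => -[->].
apply/common_nbhdP; split=> [|u /setD1P[uw uK]]; first by rewrite setD11.
by move/is_cliqueP: eK; apply.
Qed.

Lemma card_common_nbhdD1_le1 K x : x \notin common_nbhd K ->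
  #|[set v in K | x \in common_nbhd (K :\ v)]| <= 1.
Proof.
move=> xN; apply/card_le1_eqP => v1 v2 /setIdP[_ N1] /setIdP[_ N2].
(* Two distinct v1, v2 would make x adjacent to (K :\ v1) :|: (K :\ v2) = K. *)
apply/eqP; apply: contraNT xN => v12.
have cover u : u \in K -> (u \in K :\ v1) || (u \in K :\ v2).
  move=> uK; rewrite !in_setD1 uK !andbT.
  by case: (eqVneq u v1) => [->|//]; rewrite eq_sym.
case/common_nbhdP: N1 => xK1 eK1; case/common_nbhdP: N2 => xK2 eK2.
apply/common_nbhdP; split=> [|u /cover/orP[]]; [|exact: eK1|exact: eK2].
by apply/negP=> /cover/orP[]; apply/negP.
Qed.

Lemma sum_card_common_nbhdD1 s K : K \in cliques s.+1 ->
  \sum_(v in K) #|common_nbhd (K :\ v)| <= #|T| + s * #|common_nbhd K|.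
Proof.
rewrite in_cliques => /andP[_ /eqP cardK].
under eq_bigr do rewrite -sum1_card.
rewrite (exchange_big_dep predT) //= (bigID (mem (common_nbhd K))) /=.
apply: (@leq_trans (\sum_(x in common_nbhd K) s.+1 + \sum_(x | x \notin common_nbhd K) 1)).
  apply: leq_add; apply: leq_sum => x xN; rewrite sum1dep_card.
    by rewrite -cardK; apply/subset_leq_card/subsetP=> v /setIdP[].
  exact: card_common_nbhdD1_le1.
by rewrite sum_nat_const sum_nat_cond_const muln1 mulnS addnAC cardsC mulnC.
Qed.

Section Symmetric.
Hypothesis e_sym : symmetric e.

Lemma cliquesU1 s L w :
  L \in cliques s -> w \in common_nbhd L -> w |: L \in cliques s.+1.
Proof.
rewrite !in_cliques => /andP[/is_cliqueP eL /eqP <-] /common_nbhdP[wL ewL].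
rewrite cardsU1 wL eqxx andbT; apply/is_cliqueP=> u v.
case/setU1P=> [->|uL] /setU1P[->|vL]; rewrite ?eqxx //.
- by rewrite e_sym => _; apply: ewL.
- by move=> _; apply: ewL.
- exact: eL.
Qed.

Lemma sum_cliques_common_nbhd (F : {set T} -> T -> nat) s :
  \sum_(L in cliques s) \sum_(w in common_nbhd L) F L w =
  \sum_(K in cliques s.+1) \sum_(w in K) F (K :\ w) w.
Proof.
rewrite (exchange_big_dep predT) // [RHS](exchange_big_dep predT) //=.
apply: eq_bigr => w _; symmetry.
rewrite (reindex_onto (fun L => w |: L) (fun K => K :\ w)) /=; last first.
  by move=> K /andP[_ wK]; apply: setD1K.
apply: eq_big => L; last by case/andP=> _ /eqP->.
apply/idP/idP => [/andP[/andP[KP wK] /eqP KL] | /andP[LP wN]].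
  by have [] := cliquesD1 KP wK; rewrite KL => -> ->.
case/common_nbhdP: (wN) => wL _.
by rewrite cliquesU1 // setU11 setU1K ?eqxx.
Qed.

Lemma sum_card_common_nbhd s :
  \sum_(L in cliques s) #|common_nbhd L| = s.+1 * #|cliques s.+1|.
Proof.
under eq_bigr do rewrite -sum1_card.
rewrite (sum_cliques_common_nbhd (fun _ _ => 1)) mulnC -sum_nat_const.
by apply: eq_bigr => K; rewrite sum1_card in_cliques => /andP[_ /eqP].
Qed.

Lemma sum_sqr_card_common_nbhd s :
  \sum_(L in cliques s) #|common_nbhd L| ^ 2 <=
  #|T| * #|cliques s.+1| + s * s.+2 * #|cliques s.+2|.
Proof.
under eq_bigr do rewrite -mulnn -sum_nat_const.
rewrite (sum_cliques_common_nbhd (fun L _ => #|common_nbhd L|)).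
apply: (@leq_trans (\sum_(K in cliques s.+1) (#|T| + s * #|common_nbhd K|))).
  by apply: leq_sum => K; apply: sum_card_common_nbhdD1.
by rewrite big_split /= sum_nat_const -big_distrr /= sum_card_common_nbhd mulnA mulnC.
Qed.
End Symmetric.

Section Irreflexive.
Hypothesis e_irr : irreflexive e.

Lemma card_clique_edges s A : A \in cliques s ->
  #|[set p : T * T | [&& e p.1 p.2, p.1 \in A & p.2 \in A]]| = s * s.-1.
Proof.
rewrite in_cliques => /andP[/is_cliqueP eA /eqP <-].
have -> : [set p : T * T | [&& e p.1 p.2, p.1 \in A & p.2 \in A]] =
          setX A A :\: [set (u, u) | u in A].
  apply/setP=> -[u v]; rewrite !inE /=.
  case uA: (u \in A); case vA: (v \in A); rewrite ?andbF ?andbT //.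
  case: (eqVneq u v) => [<-|uv]; first by rewrite e_irr (imset_f (fun x => (x, x)) uA).
  by rewrite eA //; apply/esym/negP=> /imsetP[x _ [ux vx]]; rewrite ux vx eqxx in uv.
rewrite cardsDS; last by apply/subsetP=> _ /imsetP[x xA ->]; rewrite inE /= xA.
by rewrite cardsX card_imset => [|x y []//]; rewrite -subn1 mulnBr muln1.
Qed.

Lemma sum_kcliques_through s :
  \sum_(p : T * T | e p.1 p.2) kcliques_through e s p.1 p.2 = s * s.-1 * #|cliques s|.
Proof.
under eq_bigr do rewrite /kcliques_through -sum1dep_card.
rewrite (exchange_big_dep (mem (cliques s))) /=; last first.
  by move=> p A _ /and4P[eA sA _ _]; rewrite in_cliques eA sA.
rewrite mulnC -sum_nat_const; apply: eq_bigr => A As.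
rewrite sum1dep_card -(card_clique_edges As).
by apply: eq_card => p; move: As; rewrite !inE => /andP[-> ->].
Qed.

Lemma card_cliques_le_jointsize s :
  s.+1 * s * #|cliques s.+1| <= #|T| ^ 2 * jointsize e s.
Proof.
rewrite -[s in s.+1 * s]/(s.+1.-1) -sum_kcliques_through.
apply: (@leq_trans (\sum_(p : T * T | e p.1 p.2) jointsize e s)).
  by apply: leq_sum => p ep; apply: (leq_bigmax_cond p ep).
rewrite (@leq_trans (\sum_(p : T * T) jointsize e s)) //.
  by rewrite [leqRHS](bigID (fun p : T * T => e p.1 p.2)) leq_addr.
by rewrite sum_nat_const card_prod mulnn.
Qed.
End Irreflexive.

End CliqueCounting.

Local Open Scope ring_scope.

Section CliqueRatios.
Variables (R : realFieldType) (T : finType) (e : rel T).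
Hypothesis e_sym : symmetric e.

Local Notation n := (#|T|%:R : R).
Local Notation k s := (#|cliques e s|%:R : R).

Lemma clique_ratio_step s (lam : R) : 0 <= lam -> lam * k s <= s.+1%:R * k s.+1 ->
  (lam * s.+1%:R - n) * k s.+1 <= (s * s.+2)%:R * k s.+2.
Proof.
move=> lam_ge0 ratio.
pose d L : R := #|common_nbhd e L|%:R.
have sum_d : \sum_(L in cliques e s) d L = s.+1%:R * k s.+1.
  by rewrite -natr_sum sum_card_common_nbhd // natrM.
have sum_d2 : \sum_(L in cliques e s) d L ^+ 2 <= n * k s.+1 + (s * s.+2)%:R * k s.+2.
  under eq_bigr do rewrite -natrX.
  by rewrite -natr_sum -!natrM -natrD ler_nat sum_sqr_card_common_nbhd.
have var_ge0 : 0 <= \sum_(L in cliques e s) (d L - lam) ^+ 2.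
  by apply: sumr_ge0 => L _; apply: sqr_ge0.
have var_expand : \sum_(L in cliques e s) (d L - lam) ^+ 2 =
   \sum_(L in cliques e s) d L ^+ 2 - 2 * lam * \sum_(L in cliques e s) d L + lam ^+ 2 * k s.
  under eq_bigr do rewrite sqrrB.
  by rewrite !big_split /= sumrN sumrMnl -mulr_suml sumr_const; ring.
have lam_ratio : lam ^+ 2 * k s <= lam * (s.+1%:R * k s.+1).
  by rewrite expr2 -mulrA ler_wpM2l.
move: var_ge0; rewrite var_expand sum_d; nra.
Qed.

Variables (r : nat) (m beta : R).
Hypothesis n_eq : n = r%:R * m.
Hypothesis m_ge0 : 0 <= m.
Hypothesis beta_n : beta * n = 2 * k 2.
Hypothesis beta_ge : (r%:R - 1) * m <= beta.

Lemma growth_coef_ge j : (j < r)%N ->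
  (r%:R - j.+1%:R) * m <= j.+1%:R * beta - j%:R * n.
Proof.
move=> jr; rewrite n_eq -natr1.
have : 0 <= j%:R + 1 :> R by rewrite natr1.
by move: beta_ge; nra.
Qed.

Lemma growth_coef_ge0 j : (j < r)%N -> 0 <= j.+1%:R * beta - j%:R * n.
Proof.
move=> jr; apply: le_trans (growth_coef_ge jr).
by rewrite mulr_ge0 // subr_ge0 ler_nat.
Qed.

Lemma clique_growth j : (j < r)%N ->
  (j.+1%:R * beta - j%:R * n) * k j.+1 <= j.+2%:R * k j.+2.
Proof.
elim: j => [|j IHj] jr; first by rewrite mul0r subr0 mul1r card_cliques1 beta_n.
have jr' := ltnW jr.
have := clique_ratio_step (growth_coef_ge0 jr') (IHj jr').
have -> : (j.+1%:R * beta - j%:R * n) * j.+2%:R - n =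
          j.+1%:R * (j.+2%:R * beta - j.+1%:R * n) :> R.
  by rewrite -[j.+2%:R]natr1 -[j.+1%:R]natr1; ring.
by rewrite natrM -!mulrA ler_pM2l // ltr0n.
Qed.

Lemma card_cliques_ge_binomial j : (j < r)%N -> 'C(r, j.+1)%:R * m ^+ j.+1 <= k j.+1.
Proof.
elim: j => [|j IHj] jr; first by rewrite bin1 expr1 card_cliques1 n_eq.
have jr' := ltnW jr.
rewrite -(@ler_pM2l _ j.+2%:R) ?ltr0n //; apply: le_trans (clique_growth jr').
have -> : j.+2%:R * ('C(r, j.+2)%:R * m ^+ j.+2) =
          ((r%:R - j.+1%:R) * m) * ('C(r, j.+1)%:R * m ^+ j.+1) :> R.
  by rewrite mulrA -natrM mul_bin_left natrM natrB // exprS; ring.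
apply: ler_pM => //; last exact: IHj.
- by rewrite mulr_ge0 // subr_ge0 ler_nat ltnW.
- by rewrite mulr_ge0 // exprn_ge0.
- exact: growth_coef_ge.
Qed.

Lemma card_cliques_succ_ge : (0 < r)%N ->
  (r%:R * beta - (r%:R - 1) * n) * m ^+ r <= r.+1%:R * k r.+1.
Proof.
move=> r_gt0; have rr : (r.-1 < r)%N by rewrite prednK.
have := clique_growth rr; have := card_cliques_ge_binomial rr.
have := growth_coef_ge0 rr.
rewrite prednK // binn mul1r -subn1 natrB // => coef_ge0 k_r growth.
exact: le_trans (ler_wpM2l coef_ge0 k_r) growth.
Qed.
End CliqueRatios.

Section DenseGraphs.
Variables (R : realFieldType) (T : finType) (e : rel T).

Local Notation n := (#|T|%:R : R).
Local Notation k s := (#|cliques e s|%:R : R).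

Lemma card_gt0_of_edges_gt (a : R) : a * n ^+ 2 < k 2 -> (0 < #|T|)%N.
Proof.
rewrite lt0n; apply: contraTneq => T0; rewrite T0 expr0n mulr0 ltr0n.
by apply/negP=> /card_cliques_gt0_leq; rewrite T0.
Qed.

Lemma card_cliques_succ_gt (r : nat) (c : R) : symmetric e -> (0 < r)%N -> 0 < c ->
  ((r%:R - 1) / (2 * r%:R) + c) * n ^+ 2 < k 2 ->
  2 * c * r%:R ^+ 2 * (n / r%:R) ^+ r.+1 < r.+1%:R * k r.+1.
Proof.
move=> e_sym r_gt0 c_gt0 edges.
have r_pos : 0 < r%:R :> R by rewrite ltr0n.
have n_gt0 : 0 < n by rewrite ltr0n (card_gt0_of_edges_gt edges).
set m := n / r%:R; pose beta := 2 * k 2 / n.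
have n_eq : n = r%:R * m by rewrite mulrC divfK // gt_eqF.
have m_gt0 : 0 < m by rewrite divr_gt0.
have beta_n : beta * n = 2 * k 2 by rewrite divfK // gt_eqF.
have gap : 2 * c * r%:R * n < r%:R * beta - (r%:R - 1) * n.
  rewrite -(ltr_pM2r n_gt0) mulrBl -[r%:R * beta * n]mulrA beta_n.
  have rho_eq : (r%:R - 1) / (2 * r%:R) * (2 * r%:R) = r%:R - 1 :> R.
    by rewrite divfK // mulf_neq0 // gt_eqF.
  move: edges rho_eq; set rho := (r%:R - 1) / (2 * r%:R); nra.
have beta_ge : (r%:R - 1) * m <= beta.
  have : 0 < 2 * c * r%:R * n by rewrite !mulr_gt0.
  by move: gap; rewrite n_eq; nra.
apply: lt_le_trans (card_cliques_succ_ge e_sym n_eq (ltW m_gt0) beta_n beta_ge r_gt0).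
have -> : 2 * c * r%:R ^+ 2 * m ^+ r.+1 = 2 * c * r%:R * n * m ^+ r.
  by rewrite n_eq (exprS m); ring.
by rewrite ltr_pM2r ?exprn_gt0.
Qed.
End DenseGraphs.

Theorem lemma1 (R : realFieldType) (T : finType) (e : rel T) (r : nat) (c : R) :
  simple_graph e -> (3 <= r)%N -> 0 < c ->
  ((num_edges e)%:R > ((r%:R - 1) / (2 * r%:R) + c) * (#|T|%:R) ^+ 2) ->
  (kcliques e r.+1)%:R > 2 * c * (r%:R / (r.+1)%:R) * (#|T|%:R / r%:R) ^+ r.+1
  /\ (jointsize e r)%:R > 2 * c * (#|T|%:R / r%:R) ^+ r.-1.
Proof.
move=> [e_sym e_irr] r_ge3 c_gt0 edges.
have r_gt0 : (0 < r)%N by apply: leq_trans r_ge3.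
have n_gt0 : 0 < #|T|%:R :> R by rewrite ltr0n (card_gt0_of_edges_gt edges).
have key := card_cliques_succ_gt e_sym r_gt0 c_gt0 edges.
have := card_cliques_le_jointsize e_irr r; rewrite -(ler_nat R) !natrM => js_bound.
set n := #|T|%:R : R in n_gt0 key js_bound *; set m := n / r%:R in key *.
have base_ge0 : 0 <= 2 * c * r%:R * m ^+ r.+1.
  by rewrite !mulr_ge0 ?exprn_ge0 ?divr_ge0 ?ler0n ?(ltW c_gt0).
split.
  rewrite -(ltr_pM2l (ltr0Sn R r)); apply: le_lt_trans key.
  have -> : r.+1%:R * (2 * c * (r%:R / r.+1%:R) * m ^+ r.+1) = 2 * c * r%:R * m ^+ r.+1.
    by field; rewrite nat1r pnatr_eq0.
  have -> : 2 * c * r%:R ^+ 2 * m ^+ r.+1 = 2 * c * r%:R * m ^+ r.+1 * r%:R by ring.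
  by rewrite ler_peMr // ler1n.
rewrite -(ltr_pM2l (mulr_gt0 n_gt0 n_gt0)); apply: lt_le_trans js_bound.
have -> : n * n * (2 * c * m ^+ r.-1) = 2 * c * r%:R ^+ 2 * m ^+ r.+1.
  by rewrite /m -(prednK r_gt0) !exprS; field; rewrite nat1r pnatr_eq0.
apply: lt_le_trans key _.
by rewrite mulrAC; apply: ler_peMr; rewrite ?mulr_ge0 ?ler1n.
Qed.
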